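(* Let $(X,G)$ be a $G$-system with metric $d$ of diameter $\rho$, and let $\zeta\in\mathcal A[0,\rho]$ with $k_m(\zeta)>0$ and $k_M(\zeta)>0$. Set $\zeta_d(x,y)=\zeta(d(x,y))$. Then (i) $\underline{\mathrm{mdim}}_{\mathrm M}(X,G,d)\ge k_m(\zeta)\,\underline{\mathrm{mdim}}_{\mathrm M}(X,G,\zeta_d)$; (ii) $\overline{\mathrm{mdim}}_{\mathrm M}(X,G,d)\le k_M(\zeta)\,\overline{\mathrm{mdim}}_{\mathrm M}(X,G,\zeta_d)$.
   Context: $G$ is a countable discrete amenable group; a $G$-system is a compact metric space with a continuous $G$-action. $\mathcal A[0,\rho]$ is the set of continuous, increasing, subadditive functions $\zeta:[0,\rho]\to[0,\infty)$ with $\zeta^{-1}(0)=\{0\}$; $k_m(\zeta)=\liminf_{\varepsilon\to0^+}\frac{\log\zeta(\varepsilon)}{\log\varepsilon}$, $k_M(\zeta)=\limsup_{\varepsilon\to0^+}\frac{\log\zeta(\varepsilon)}{\log\varepsilon}$. For a Følner sequence $(F_n)$ and metric $\rho'$, $\rho'_F(x,y)=\max_{g\in F}\rho'(gx,gy)$, $s_F(\rho',\varepsilon,X)$ is the maximal cardinality of a subset whose distinct points have $\rho'_F$-distance $>\varepsilon$; $\overline{\mathrm{mdim}}_{\mathrm M}(X,G,\rho')=\limsup_{\varepsilon\to0}\frac1{|\log\varepsilon|}\limsup_n\frac1{|F_n|}\log s_{F_n}(\rho',\varepsilon,X)$ and $\underline{\mathrm{mdim}}_{\mathrm M}$ the same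 with $\liminf_{\varepsilon\to0}$ (equivalently with minimal spanning-set cardinalities; independent of the Følner sequence). *)

From Stdlib Require List.
From HB Require Import structures.
From mathcomp Require Import all_boot all_order all_algebra.
From mathcomp Require Import finmap.
From mathcomp Require Import all_classical all_reals all_analysis.
Set Implicit Arguments. Unset Strict Implicit. Unset Printing Implicit Defensive.
Import Order.TTheory GRing.Theory Num.Theory numFieldNormedType.Exports.
Local Open Scope classical_set_scope.
Local Open Scope ring_scope.

Definition is_group (G : Type) (mul : G -> G -> G) (e : G) (inv : G -> G) : Prop :=
  (forall a b c, mul a (mul b c) = mul (mul a b) c) /\
  (forall a, mul e a = a) /\ (forall a, mul a e = a) /\
  (forall a, mul (inv a) a = e) /\ (forall a, mul a (inv a) = e).

Definition ltrans (G : countType) (mul : G -> G -> G) (g : G) (F : {fset G}) : {fset G} :=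
  [fset mul g x | x in F]%fset.

Definition is_Folner (R : realType) (G : countType) (mul : G -> G -> G)
    (F : nat -> {fset G}) : Prop :=
  (forall n, F n != fset0%fset) /\
  (forall g : G,
     (fun n => (#|` ((ltrans mul g (F n) `\` F n) `|` (F n `\` ltrans mul g (F n)))%fset|)%:R
               / (#|` F n|)%:R : R) @ \oo --> 0).

Definition is_metric (R : realType) (X : Type) (d : X -> X -> R) : Prop :=
  (forall x y, 0 <= d x y) /\ (forall x y, d x y = 0 <-> x = y) /\
  (forall x y, d x y = d y x) /\ (forall x y z, d x z <= d x y + d y z).

Definition d_open (R : realType) (X : Type) (d : X -> X -> R) (U : set X) : Prop :=
  forall x, U x -> exists2 r : R, 0 < r & (forall y, d x y < r -> U y).

Definition d_compact (R : realType) (X : Type) (d : X -> X -> R) : Prop :=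
  forall (I : Type) (U : I -> set X), (forall i, d_open d (U i)) ->
    (forall x, exists i, U i x) ->
    exists s : seq I, forall x, exists2 i, Stdlib.Lists.List.In i s & U i x.

Definition d_continuous (R : realType) (X : Type) (d : X -> X -> R) (f : X -> X) : Prop :=
  forall x (eps : R), 0 < eps -> exists2 delta : R, 0 < delta &
    forall y, d x y < delta -> d (f x) (f y) < eps.

Definition is_Gsystem (R : realType) (G : countType) (mul : G -> G -> G) (e : G)
    (X : Type) (d : X -> X -> R) (act : G -> X -> X) : Prop :=
  is_metric d /\ d_compact d /\
  (forall x, act e x = x) /\ (forall g h x, act (mul g h) x = act g (act h x)) /\
  (forall g, d_continuous d (act g)).

(* diam = rho (the diameter of a compact metric space is attained) *)
Definition is_diameter (R : realType) (X : Type) (d : X -> X -> R) (rho : R) : Prop :=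
  (forall x y, d x y <= rho) /\ (exists x y, d x y = rho).

Definition in_A (R : realType) (rho : R) (zeta : R -> R) : Prop :=
  {within `[0, rho], continuous zeta} /\
  (forall s t, 0 <= s -> s <= t -> t <= rho -> zeta s <= zeta t) /\
  (forall s t, 0 <= s -> 0 <= t -> s + t <= rho -> zeta (s + t) <= zeta s + zeta t) /\
  (forall t, 0 <= t -> t <= rho -> 0 <= zeta t) /\
  (forall t, 0 <= t -> t <= rho -> zeta t = 0 -> t = 0) /\ zeta 0 = 0.

Local Open Scope ereal_scope.

Definition limsup0 (R : realType) (h : R -> \bar R) : \bar R :=
  ereal_inf [set ereal_sup [set h eps | eps in [set eps : R | (0 < eps < delta)%R]]
            | delta in [set delta : R | (0 < delta)%R]].
Definition liminf0 (R : realType) (h : R -> \bar R) : \bar R :=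
  ereal_sup [set ereal_inf [set h eps | eps in [set eps : R | (0 < eps < delta)%R]]
            | delta in [set delta : R | (0 < delta)%R]].

Definition limsupn (R : realType) (u : nat -> \bar R) : \bar R :=
  ereal_inf [set ereal_sup [set u n | n in [set n : nat | (N <= n)%N]] | N in [set: nat]].

Definition k_m (R : realType) (zeta : R -> R) : \bar R :=
  liminf0 (fun eps : R => (ln (zeta eps) / ln eps)%:E).
Definition k_M (R : realType) (zeta : R -> R) : \bar R :=
  limsup0 (fun eps : R => (ln (zeta eps) / ln eps)%:E).

Definition dist_F (R : realType) (G : countType) (X : Type) (act : G -> X -> X)
    (rho' : X -> X -> R) (F : {fset G}) (x y : X) : R :=
  \big[Num.max/0%R]_(g <- F) rho' (act g x) (act g y).

Definition sep_num (R : realType) (G : countType) (X : Type) (act : G -> X -> X)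
    (rho' : X -> X -> R) (F : {fset G}) (eps : R) : \bar R :=
  ereal_sup [set ((size s)%:R)%:E | s in
     [set s : seq X | pairwise (fun x y => `[< (eps < dist_F act rho' F x y)%R >]) s]].

Definition sep_rate (R : realType) (G : countType) (X : Type) (act : G -> X -> X)
    (rho' : X -> X -> R) (F : nat -> {fset G}) (eps : R) : \bar R :=
  limsupn (fun n => (ln (fine (sep_num act rho' (F n) eps)) / (#|` F n|)%:R)%:E).

Definition upper_mdim_M (R : realType) (G : countType) (X : Type) (act : G -> X -> X)
    (rho' : X -> X -> R) (F : nat -> {fset G}) : \bar R :=
  limsup0 (fun eps : R => sep_rate act rho' F eps * ((`|ln eps|)^-1)%:E).
Definition lower_mdim_M (R : realType) (G : countType) (X : Type) (act : G -> X -> X)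
    (rho' : X -> X -> R) (F : nat -> {fset G}) : \bar R :=
  liminf0 (fun eps : R => sep_rate act rho' F eps * ((`|ln eps|)^-1)%:E).

From HB Require Import structures.
From mathcomp Require Import all_boot all_order all_algebra.
From mathcomp Require Import finmap.
From mathcomp Require Import all_classical all_reals all_analysis.
From mathcomp Require Import lra ring.
Import Order.TTheory GRing.Theory Num.Theory numFieldNormedType.Exports.
Local Open Scope classical_set_scope.
Local Open Scope ring_scope.
Local Open Scope ereal_scope.
Set Implicit Arguments. Unset Strict Implicit. Unset Printing Implicit Defensive.

(* Since zeta is increasing, a set that is (F, zeta eps)-separated for zeta_d is
   (F, eps)-separated for d, and a set that is (F, eps)-separated for d is
   (F, zeta eps / 2)-separated for zeta_d.  Compactness makes all these separated
   sets finite, so the separation rates a (of d) and b (of zeta_d) satisfy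
   b (zeta eps) <= a eps <= b (zeta eps / 2).  Dividing by |ln eps| and writing
   |ln eps| = |ln (zeta eps)| * (ln eps / ln (zeta eps)), the ratio
   ln (zeta eps) / ln eps contributes k_m resp. k_M as eps -> 0, while
   zeta eps -> 0 by continuity; the extra ln 2 in (ii) is negligible, and the
   subadditive lower bound zeta eps >= c eps keeps k_M finite.  Neither the group
   law nor the Følner property plays a role: the comparison holds for every
   finite window F n separately. *)

Lemma ltr_half (R : numFieldType) (x : R) : (0 < x)%R -> (x / 2 < x)%R.
Proof. by move=> x0; rewrite ltr_pdivrMr // ltr_pMr // ltr1n. Qed.

Section OneSidedLimits.
Variables (R : realType) (h : R -> \bar R).

Lemma limsup0_le (y : \bar R) (dl : R) :
  (0 < dl)%R -> (forall eps, (0 < eps)%R -> (eps < dl)%R -> h eps <= y) ->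
  limsup0 h <= y.
Proof.
move=> dl0 hy.
apply: (@le_trans _ _ (ereal_sup [set h eps | eps in [set eps : R | (0 < eps < dl)%R]])).
  by apply: ereal_inf_lbound; exists dl.
by apply: ge_ereal_sup => _ [eps /andP[eps0 epsdl] <-]; exact: hy.
Qed.

Lemma limsup0_lt (y : \bar R) :
  limsup0 h < y -> exists2 dl : R, (0 < dl)%R &
    forall eps, (0 < eps)%R -> (eps < dl)%R -> h eps < y.
Proof.
move/ereal_inf_lt => [_ [dl /= dl0 <-] supy]; exists dl => // eps eps0 epsdl.
by apply: le_lt_trans supy; apply: ereal_sup_ubound; exists eps; rewrite //= eps0.
Qed.

Lemma limsup0_ge (y : \bar R) :
  (forall dl, (0 < dl)%R -> exists2 eps, (0 < eps < dl)%R & y <= h eps) ->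
  y <= limsup0 h.
Proof.
move=> hy; apply: le_ereal_inf_tmp => _ [dl /= dl0 <-].
have [eps epsdl yh] := hy dl dl0.
by apply: le_trans yh _; apply: ereal_sup_ubound; exists eps.
Qed.

Lemma liminf0_ge (y : \bar R) (dl : R) :
  (0 < dl)%R -> (forall eps, (0 < eps)%R -> (eps < dl)%R -> y <= h eps) ->
  y <= liminf0 h.
Proof.
move=> dl0 hy.
apply: (@le_trans _ _ (ereal_inf [set h eps | eps in [set eps : R | (0 < eps < dl)%R]])).
  by apply: le_ereal_inf_tmp => _ [eps /andP[eps0 epsdl] <-]; exact: hy.
by apply: ereal_sup_ubound; exists dl.
Qed.

Lemma liminf0_cst (y : \bar R) : (forall eps, (0 < eps)%R -> h eps = y) -> liminf0 h = y.
Proof.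
move=> hy; apply/eqP; rewrite eq_le; apply/andP; split.
  apply: ge_ereal_sup => _ [dl /= dl0 <-]; rewrite -(hy (dl / 2)%R) ?divr_gt0 //.
  by apply: ereal_inf_lbound; exists (dl / 2)%R; rewrite //= divr_gt0 ?ltr_half.
by apply: (liminf0_ge ltr01) => eps eps0 _; rewrite hy.
Qed.

Lemma limsup0_cst (y : \bar R) : (forall eps, (0 < eps)%R -> h eps = y) -> limsup0 h = y.
Proof.
move=> hy; apply/eqP; rewrite eq_le; apply/andP; split.
  by apply: (limsup0_le ltr01) => eps eps0 _; rewrite hy.
apply: limsup0_ge => dl dl0; exists (dl / 2)%R; last by rewrite hy ?divr_gt0.
by rewrite divr_gt0 ?ltr_half.
Qed.

Lemma liminf0_ge0 : (forall eps, (0 < eps)%R -> 0 <= h eps) -> 0 <= liminf0 h.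
Proof. by move=> h_ge0; apply: (liminf0_ge ltr01) => eps eps0 _; exact: h_ge0. Qed.

Lemma limsup0_ge0 : (forall eps, (0 < eps)%R -> 0 <= h eps) -> 0 <= limsup0 h.
Proof.
move=> h_ge0; apply: limsup0_ge => dl dl0; exists (dl / 2)%R; last by rewrite h_ge0 ?divr_gt0.
by rewrite divr_gt0 ?ltr_half.
Qed.

End OneSidedLimits.

Section SupProduct.
Variable R : realType.

Lemma ge0_mule_ereal_sup_le (B : set \bar R) (x M : \bar R) :
  0 <= M -> 0 <= x -> (forall y, B y -> 0 <= y -> x * y <= M) ->
  x * ereal_sup B <= M.
Proof.
move=> M0 x0 xBM.
have [supB_le0|supB_gt0] := leP (ereal_sup B) 0; first exact: le_trans (mule_ge0_le0 _ _) M0.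
have [y By y0] := ereal_sup_gt supB_gt0.
case: x x0 xBM => [r r0 xBM| _ xBM|//]; last first.
  by have := xBM _ By (ltW y0); rewrite gt0_mulye // leye_eq => /eqP ->; exact: leey.
have [->|rn0] := eqVneq r 0%R; first by rewrite mul0e.
have {}r0 : (0 < r)%R by rewrite lt_neqAle eq_sym rn0 -lee_fin.
rewrite -lee_pdivlMl //; apply: ge_ereal_sup => z Bz; rewrite lee_pdivlMl //.
have [z0|z0] := leP 0 z; first exact: xBM.
by apply: le_trans M0; rewrite mule_ge0_le0 // ltW.
Qed.

Lemma ereal_sup_mul_le (A B : set \bar R) (M : \bar R) :
  0 <= M -> 0 <= ereal_sup B ->
  (forall x y, A x -> B y -> 0 <= x -> 0 <= y -> x * y <= M) ->
  ereal_sup A * ereal_sup B <= M.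
Proof.
move=> M0 supB0 ABM; rewrite muleC; apply: ge0_mule_ereal_sup_le => // x Ax x0.
by rewrite muleC; apply: ge0_mule_ereal_sup_le => // y By y0; exact: ABM.
Qed.

End SupProduct.

Lemma pairwise_size_le_cover (T I : Type) (r : rel T) (U : I -> pred T)
    (s : seq T) (cs : seq I) :
  (forall i x y, U i x -> U i y -> ~~ r x y) ->
  pairwise r s -> all (fun x => has (U^~ x) cs) s -> (size s <= size cs)%N.
Proof.
move=> Usmall; elim: cs s => [|c cs IH] s rs scov.
  by case: s rs scov => //= x s _ /andP[].
rewrite -(count_predC (U c) s) -!size_filter /= -add1n; apply: leq_add.
  have := pairwise_filter (U c) rs; have := seq.filter_all (U c) s.
  case: (seq.filter (U c) s) => [|x [|y t]] //= /and3P[Ux Uy _] /andP[/andP[rxy _] _].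
  by move: (Usmall c x y Ux Uy); rewrite rxy.
apply: IH; first exact: pairwise_filter.
rewrite seq.all_filter; apply: sub_all scov => x /=.
by case: (U c x) => //= ->.
Qed.

Lemma common_pos_radius (T : eqType) (R : realType) (P : T -> R -> Prop) (s : seq T) :
  (forall t r r', (0 < r')%R -> (r' <= r)%R -> P t r -> P t r') ->
  (forall t, t \in s -> exists2 r, (0 < r)%R & P t r) ->
  exists2 r, (0 < r)%R & forall t, t \in s -> P t r.
Proof.
move=> Pmono; elim: s => [|a s IH] Ps; first by exists 1%R.
have [ra ra0 Pa] := Ps a (mem_head _ _).
have [rs rs0 Pall] : exists2 r, (0 < r)%R & forall t, t \in s -> P t r.
  by apply: IH => t ts; apply: Ps; rewrite in_cons ts orbT.
have m0 : (0 < Num.min ra rs)%R by rewrite lt_min ra0 rs0.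
exists (Num.min ra rs) => // t; rewrite in_cons => /orP[/eqP -> | ts].
  by apply: Pmono Pa; rewrite ?ge_min ?lexx.
by apply: Pmono (Pall t ts); rewrite ?ge_min ?lexx ?orbT.
Qed.

Section SeparatedSets.
Variables (R : realType) (G : countType) (X : Type) (act : G -> X -> X).

Lemma le_dist_F (r : X -> X -> R) (F : {fset G}) x y g :
  g \in F -> (r (act g x) (act g y) <= dist_F act r F x y)%R.
Proof. by move=> gF; apply: (le_bigmax_seq 0%R g). Qed.

Lemma dist_F_gt (r : X -> X -> R) (F : {fset G}) x y (eps : R) :
  (0 <= eps)%R -> (eps < dist_F act r F x y)%R ->
  exists2 g, g \in F & (eps < r (act g x) (act g y))%R.
Proof.
move=> eps0; apply: contraPP => nosep; apply/negP; rewrite -leNgt.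
rewrite /dist_F big_seq; apply: bigmax_le => // g gF.
by rewrite leNgt; apply/negP => sep_g; apply: nosep; exists g.
Qed.

Lemma le_sep_num (r1 r2 : X -> X -> R) (F1 F2 : {fset G}) (e1 e2 : R) :
  (forall x y, (e1 < dist_F act r1 F1 x y)%R -> (e2 < dist_F act r2 F2 x y)%R) ->
  sep_num act r1 F1 e1 <= sep_num act r2 F2 e2.
Proof.
move=> sep12; apply: ereal_sup_le => _ [s /= rs <-]; exists s => //=.
by apply: sub_pairwise rs => x y /asboolP/sep12/asboolP.
Qed.

Lemma sep_num_ge1 (r : X -> X -> R) (F : {fset G}) (eps : R) (x : X) :
  1 <= sep_num act r F eps.
Proof. by apply: ereal_sup_ubound; exists [:: x]. Qed.

Lemma sep_num_le1 (r : X -> X -> R) (F : {fset G}) (eps : R) :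
  (0 <= eps)%R -> (forall x y, r x y <= eps)%R -> sep_num act r F eps <= 1.
Proof.
move=> eps0 r_le; apply: ge_ereal_sup => _ [[|x [|y t]] /= rs <-];
  rewrite ?lee_fin ?ler01 //.
move: rs => /andP[/andP[/asboolP + _] _]; rewrite ltNge => /negP[].
by rewrite /dist_F big_seq; apply: bigmax_le.
Qed.

End SeparatedSets.

Lemma sep_num_lt_pinfty (R : realType) (G : countType) (X : Type) (act : G -> X -> X)
    (d : X -> X -> R) (F : {fset G}) (eps : R) :
  is_metric d -> d_compact d -> (forall g, d_continuous d (act g)) -> (0 < eps)%R ->
  sep_num act d F eps < +oo.
Proof.
move=> [_ [d_eq [d_sym d_tri]]] dcomp dcont eps0.
(* the Bowen balls of radius eps/2 cover X; none contains two separated points *)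
pose U x y := forall g, g \in F -> (d (act g x) (act g y) < eps / 2)%R.
have U_open x : d_open d (U x).
  move=> y Uxy.
  have [r r0 near_y] := @common_pos_radius _ _ (fun g r => forall z, (d y z < r)%R ->
      (d (act g y) (act g z) < eps / 2 - d (act g x) (act g y))%R) F
    (fun g r r' _ r'r Pr z yz => Pr z (lt_le_trans yz r'r))
    (fun g gF => dcont g y (eps / 2 - d (act g x) (act g y))%R
       (ltac:(by rewrite subr_gt0; exact: Uxy g gF))).
  exists r => // z yz g gF; apply: le_lt_trans (d_tri _ (act g y) _) _.
  by rewrite -ltrBrDl; exact: near_y.
have U_cover x : exists y, U y x.
  by exists x => g _; rewrite (proj2 (d_eq _ _) erefl) divr_gt0.
have [cs cs_cover] := dcomp X U U_open U_cover.
rewrite (@le_lt_trans _ _ (size cs)%:R%:E) ?ltey //.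
apply: ge_ereal_sup => _ [s /= rs <-]; rewrite lee_fin ler_nat.
apply: (pairwise_size_le_cover (U := fun c x => `[< U c x >])) rs _.
  move=> c x y /asboolP Ucx /asboolP Ucy; apply/asboolPn/negP; rewrite -leNgt.
  rewrite /dist_F big_seq; apply: bigmax_le => [|g gF]; first exact: ltW.
  apply: ltW; apply: le_lt_trans (d_tri _ (act g c) _) _.
  by rewrite (splitr eps); apply: ltrD; [rewrite d_sym; exact: Ucx | exact: Ucy].
apply: sub_all (all_predT s) => x _; have [c cs_c Ucx] := cs_cover x.
elim: cs cs_c {cs_cover} => //= c' cs IH [->|/IH ->]; last by rewrite orbT.
by rewrite asboolT.
Qed.

Section Limsupn.
Variable R : realType.

Lemma le_limsupn (u v : nat -> \bar R) :
  (forall n, u n <= v n) -> limsupn u <= limsupn v.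
Proof.
move=> uv; apply: le_ereal_inf_tmp => _ [N _ <-].
apply: le_trans (ereal_inf_lbound _) _; first by exists N.
apply: ge_ereal_sup => _ [n Nn <-]; apply: le_trans (uv n) _.
by apply: ereal_sup_ubound; exists n.
Qed.

Lemma limsupn_cst (u : nat -> \bar R) (y : \bar R) :
  (forall n, u n = y) -> limsupn u = y.
Proof.
move=> uy; apply/eqP; rewrite eq_le; apply/andP; split.
  apply: le_trans (ereal_inf_lbound _) _; first by exists 0%N.
  by apply: ge_ereal_sup => _ [n _ <-]; rewrite uy.
apply: le_ereal_inf_tmp => _ [N _ <-]; rewrite -(uy N).
by apply: ereal_sup_ubound; exists N => /=.
Qed.

End Limsupn.

Lemma ln_fine_ge0 (R : realType) (s : \bar R) : 1 <= s -> (0 <= ln (fine s))%R.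
Proof. by case: s => [r| |] //=; [rewrite lee_fin => /ln_ge0 | rewrite ln0]. Qed.

Lemma ler_ln_fine (R : realType) (s1 s2 : \bar R) :
  1 <= s1 -> s1 <= s2 -> s2 < +oo -> (ln (fine s1) <= ln (fine s2))%R.
Proof.
case: s1 => [r1| |]; case: s2 => [r2| |] //=; rewrite ?lee_fin => r1_ge1 r12 _.
have r1_gt0 : (0 < r1)%R := lt_le_trans ltr01 r1_ge1.
by rewrite ler_ln ?posrE // (lt_le_trans r1_gt0).
Qed.

Section SeparationRate.
Variables (R : realType) (G : countType) (X : Type) (act : G -> X -> X).
Variables (F : nat -> {fset G}) (x0 : X).

Lemma sep_rate_ge0 (r : X -> X -> R) (eps : R) : 0 <= sep_rate act r F eps.
Proof.
rewrite -(@limsupn_cst _ (fun=> 0) 0) //; apply: le_limsupn => n.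
by rewrite lee_fin divr_ge0 //; exact/ln_fine_ge0/sep_num_ge1.
Qed.

Lemma sep_rate_eq0 (r : X -> X -> R) (eps : R) :
  (forall n, sep_num act r (F n) eps <= 1) -> sep_rate act r F eps = 0.
Proof.
move=> le1; apply: limsupn_cst => n.
have -> : sep_num act r (F n) eps = 1.
  by apply/eqP; rewrite eq_le le1; exact: sep_num_ge1.
by rewrite /= ln1 mul0r.
Qed.

Lemma le_sep_rate (r1 r2 : X -> X -> R) (e1 e2 : R) :
  (forall n, sep_num act r1 (F n) e1 <= sep_num act r2 (F n) e2) ->
  (forall n, sep_num act r2 (F n) e2 < +oo) ->
  sep_rate act r1 F e1 <= sep_rate act r2 F e2.
Proof.
move=> le12 fin2; apply: le_limsupn => n; rewrite lee_fin.
apply: ler_wpM2r; first by rewrite invr_ge0.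
by apply: ler_ln_fine => //; exact: sep_num_ge1.
Qed.

Lemma mdim_M_eq0 (r : X -> X -> R) : (forall x y, (r x y <= 0)%R) ->
  lower_mdim_M act r F = 0 /\ upper_mdim_M act r F = 0.
Proof.
move=> r_le0; have rate0 eps : (0 < eps)%R ->
    sep_rate act r F eps * ((`|ln eps|)^-1)%:E = 0.
  move=> eps0; rewrite sep_rate_eq0 ?mul0e // => n.
  by apply: sep_num_le1 (ltW eps0) _ => x y; exact: le_trans (r_le0 x y) (ltW eps0).
by split; [exact: liminf0_cst | exact: limsup0_cst].
Qed.

End SeparationRate.

Section ClassA.
Variables (R : realType) (rho : R) (zeta : R -> R).
Hypothesis zetaA : in_A rho zeta.

Lemma zeta_gt0 (t : R) : (0 < t)%R -> (t <= rho)%R -> (0 < zeta t)%R.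
Proof.
have [_ [_ [_ [zeta_ge0 [zeta_eq0 _]]]]] := zetaA.
move=> t0 trho; rewrite lt_neqAle zeta_ge0 ?(ltW t0) // andbT.
by apply/eqP => /esym /(zeta_eq0 _ (ltW t0) trho) t_eq0; rewrite t_eq0 ltxx in t0.
Qed.

Lemma zeta_small (c : R) : (0 <= rho)%R -> (0 < c)%R ->
  exists2 eta : R, (0 < eta)%R &
    forall t, (0 <= t)%R -> (t < eta)%R -> (t <= rho)%R -> (zeta t < c)%R.
Proof.
have [zeta_cont [_ [_ [_ [_ zeta0]]]]] := zetaA.
move=> rho0 c0; have rho_itv : [set` `[0%R, rho]] (0%R : R).
  by rewrite /= in_itv /= lexx rho0.
have /cvgr_dist_lt /(_ c c0) := (subspace_continuousP _ _).1 zeta_cont 0%R rho_itv.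
rewrite near_withinE => /nbhs_ballP [eta /= eta0 near0].
exists eta => // t t0 teta trho; have := near0 t; rewrite /from_subspace /=.
rewrite zeta0 sub0r normrN => zeta_lt; apply: le_lt_trans (ler_norm _) _.
apply: zeta_lt; first by rewrite /ball /= sub0r normrN ger0_norm.
by rewrite in_itv /= t0 trho.
Qed.

Lemma zeta_natmul_le (eps : R) (m : nat) :
  (0 < eps)%R -> (m%:R * eps <= rho)%R -> (zeta (m%:R * eps) <= m%:R * zeta eps)%R.
Proof.
have [_ [_ [zeta_subadd [_ [_ zeta0]]]]] := zetaA.
move=> eps0; elim: m => [|m IH] meps; first by rewrite !mul0r zeta0.
have m_eps : (m%:R * eps <= rho)%R.
  by apply: le_trans meps; rewrite ler_pM2r // ler_nat.
rewrite -addn1 natrD !mulrDl !mul1r; apply: le_trans (zeta_subadd _ _ _ _ _) _.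
- exact: mulr_ge0 (ler0n _ _) (ltW eps0).
- exact: ltW.
- by move: meps; rewrite -natr1 mulrDl mul1r.
by rewrite lerD2r IH.
Qed.

Lemma zeta_linear_lower (eps : R) : (0 < rho)%R -> (0 < eps)%R -> (eps <= rho)%R ->
  (zeta rho / (2 * rho) * eps <= zeta eps)%R.
Proof.
have [_ [zeta_mono [zeta_subadd [zeta_ge0 _]]]] := zetaA.
move=> rho0 eps0 epsrho.
have := truncn_itv (divr_ge0 (ltW rho0) (ltW eps0)).
set n := Num.truncn _ => /andP[n_le n_gt].
have n_eps : (n%:R * eps <= rho)%R by rewrite -ler_pdivlMr.
have rho_lt : (rho < n.+1%:R * eps)%R by rewrite -ltr_pdivrMr.
have zeta_rho : (zeta rho <= n%:R * zeta eps + zeta eps)%R.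
  rewrite -[rho in zeta rho](subrKC (n%:R * eps)).
  apply: le_trans (zeta_subadd _ _ _ _ _) _.
  - exact: mulr_ge0 (ler0n _ _) (ltW eps0).
  - by rewrite subr_ge0.
  - by rewrite subrKC.
  apply: lerD; first exact: zeta_natmul_le.
  apply: zeta_mono; rewrite ?subr_ge0 //.
  by rewrite lerBlDl (le_trans (ltW rho_lt)) // -natr1 mulrDl mul1r.
have n_ge1 : (1 <= n%:R :> R)%R.
  by rewrite ler1n lt0n; apply: contraTneq rho_lt => ->; rewrite mul1r -leNgt.
have zeps0 : (0 <= zeta eps)%R := zeta_ge0 _ (ltW eps0) epsrho.
rewrite mulrAC ler_pdivrMr ?mulr_gt0 //; nra.
Qed.

Lemma k_M_lt_pinfty : (0 < rho)%R -> k_M zeta < +oo.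
Proof.
move=> rho0; pose c := (zeta rho / (2 * rho))%R.
have c0 : (0 < c)%R by rewrite divr_gt0 ?mulr_gt0 ?zeta_gt0.
apply: (@le_lt_trans _ _ 2%:E); last exact: ltey.
apply: (@limsup0_le _ _ _ (Num.min (Num.min rho 1%R) c)).
  by rewrite !lt_min rho0 ltr01 c0.
move=> eps eps0; rewrite !lt_min => /andP[/andP[epsrho eps1] epsc].
have ln_eps : (ln eps < 0)%R by rewrite ln_lt0 // eps0 eps1.
rewrite lee_fin ler_ndivrMr //.
have c_eps : (c * eps <= zeta eps)%R by apply: zeta_linear_lower => //; exact: ltW.
have zeta_eps0 : (0 < zeta eps)%R by apply: zeta_gt0 => //; exact: ltW.
have c_eps0 : (0 < c * eps)%R by rewrite mulr_gt0.
have : (ln (c * eps) <= ln (zeta eps))%R by rewrite ler_ln ?posrE.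
have : (ln eps <= ln c)%R by rewrite ler_ln ?posrE // ltW.
rewrite lnM ?posrE //; lra.
Qed.

End ClassA.

Section ZetaSeparation.
Variables (R : realType) (G : countType) (X : Type) (act : G -> X -> X).
Variables (d : X -> X -> R) (rho : R) (zeta : R -> R).
Hypotheses (d_metric : is_metric d) (d_le : forall x y, (d x y <= rho)%R).
Hypothesis zetaA : in_A rho zeta.
Let d_ge0 : forall x y, (0 <= d x y)%R := d_metric.1.
Let zeta_d x y := zeta (d x y).

Lemma sep_zeta_sep (F : {fset G}) (eps : R) x y :
  (0 <= eps)%R -> (eps <= rho)%R ->
  (zeta eps < dist_F act zeta_d F x y)%R -> (eps < dist_F act d F x y)%R.
Proof.
have [_ [zeta_mono [_ [zeta_ge0 _]]]] := zetaA.
move=> eps0 epsrho /(dist_F_gt (zeta_ge0 _ eps0 epsrho)) [g gF zeta_lt].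
rewrite ltNge; apply/negP => dist_le; move: zeta_lt; apply/negP; rewrite -leNgt.
by apply: zeta_mono => //; apply: le_trans dist_le; exact: le_dist_F.
Qed.

Lemma sep_sep_zeta (F : {fset G}) (eps c : R) x y :
  (0 <= eps)%R -> (c < zeta eps)%R ->
  (eps < dist_F act d F x y)%R -> (c < dist_F act zeta_d F x y)%R.
Proof.
have [_ [zeta_mono _]] := zetaA.
move=> eps0 c_lt /(dist_F_gt eps0) [g gF eps_lt].
apply: lt_le_trans c_lt (le_trans _ (le_dist_F _ _ _ _ gF)).
by apply: zeta_mono => //; exact: ltW.
Qed.

Lemma sep_zeta_sep_pos (c : R) : (0 <= rho)%R -> (0 < c)%R ->
  exists2 eps : R, (0 < eps)%R & forall F x y,
    (c < dist_F act zeta_d F x y)%R -> (eps < dist_F act d F x y)%R.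
Proof.
move=> rho0 c0; have [eta eta0 zeta_lt] := zeta_small zetaA rho0 c0.
exists (eta / 2)%R; first by rewrite divr_gt0.
move=> F x y /(dist_F_gt (ltW c0)) [g gF c_lt].
apply: lt_le_trans (le_dist_F _ _ _ _ gF).
have : (eta <= d (act g x) (act g y))%R.
  rewrite leNgt; apply/negP => lt_eta.
  by have := zeta_lt _ (d_ge0 _ _) lt_eta (d_le _ _); rewrite ltNge (ltW c_lt).
exact/lt_le_trans/ltr_half.
Qed.

Variables (F : nat -> {fset G}) (x0 : X).
Hypotheses (d_cpt : d_compact d) (act_cont : forall g, d_continuous d (act g)).

Lemma sep_rate_zeta_le (eps : R) : (0 < eps)%R -> (eps <= rho)%R ->
  sep_rate act zeta_d F (zeta eps) <= sep_rate act d F eps.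
Proof.
move=> eps0 epsrho; apply: (le_sep_rate x0) => n.
  by apply: le_sep_num => x y; apply: sep_zeta_sep => //; exact: ltW.
exact: sep_num_lt_pinfty.
Qed.

Lemma sep_rate_le_zeta (eps c : R) : (0 < eps)%R -> (0 < c)%R -> (c < zeta eps)%R ->
  sep_rate act d F eps <= sep_rate act zeta_d F c.
Proof.
move=> eps0 c0 c_lt; apply: (le_sep_rate x0) => n.
  by apply: le_sep_num => x y; apply: sep_sep_zeta => //; exact: ltW.
have rho0 : (0 <= rho)%R := le_trans (d_ge0 x0 x0) (d_le x0 x0).
have [eps' eps'0 sep_eps'] := sep_zeta_sep_pos rho0 c0.
apply: le_lt_trans (sep_num_lt_pinfty (F n) d_metric d_cpt act_cont eps'0).
by apply: le_sep_num; exact: sep_eps'.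
Qed.

End ZetaSeparation.

Lemma neg_divr_mulV_norm (R : realFieldType) (x y : R) :
  (x < 0)%R -> (y < 0)%R -> (x / y * `|x|^-1 = `|y|^-1)%R.
Proof.
move=> x0 y0; rewrite !ltr0_norm // !invrN mulrN -mulNr -mulrN mulrAC.
by rewrite divff ?mul1r // lt_eqF.
Qed.

Lemma norm_ln_half_div_le (R : realType) (z e k t : R) :
  (0 < z)%R -> (z < 1)%R -> (0 < t)%R -> (0 < e)%R -> (e < expR (- (ln 2 / t)))%R ->
  (ln z / ln e < k + t)%R -> (`|ln (z / 2)| / `|ln e| <= k + 2 * t)%R.
Proof.
move=> z0 z1 t0 e0 e_small z_ratio.
have ln2 : (0 < ln (2 : R))%R by rewrite ln_gt0 // ltr1n.
have ln_e : (ln e < - (ln 2 / t))%R.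
  by rewrite -[X in (_ < X)%R]expRK ltr_ln ?posrE ?expR_gt0.
have ln_e0 : (ln e < 0)%R by apply: lt_trans ln_e _; rewrite oppr_lt0 divr_gt0.
have ln_z2 : (ln (z / 2) < 0)%R.
  by rewrite ln_lt0 // divr_gt0 //= (lt_trans (ltr_half z0)).
rewrite !ltr0_norm // lnM ?posrE ?invr_gt0 // lnV ?posrE //.
have -> : ((- (ln z - ln 2)) / - ln e = ln z / ln e + ln 2 / - ln e)%R.
  by field; rewrite lt_eqF.
suff : (ln 2 / - ln e <= t)%R by lra.
move: ln_e; rewrite ler_pdivrMr ?oppr_gt0 // ltrNr ltr_pdivrMr // => /ltW; lra.
Qed.

Lemma exists_slack_mul_le (R : realFieldType) (l k u : R) :
  (0 <= l)%R -> (0 < k)%R -> (0 < u)%R ->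
  exists2 t, (0 < t)%R & ((l + t) * (k + 2 * t) <= l * k + u)%R.
Proof.
move=> l0 k0 u0; have den0 : (0 < 2 * l + k + 2)%R by lra.
pose t := Num.min 1%R (u / (2 * l + k + 2))%R.
have t0 : (0 < t)%R by rewrite lt_min ltr01 divr_gt0.
have t1 : (t <= 1)%R by rewrite ge_min lexx.
have tu : (t * (2 * l + k + 2) <= u)%R by rewrite -ler_pdivlMr // ge_min lexx orbT.
exists t => //; nra.
Qed.

Definition over_abs_ln (R : realType) (f : R -> \bar R) (eps : R) : \bar R :=
  f eps * ((`|ln eps|)^-1)%:E.

Lemma over_abs_ln_ge0 (R : realType) (f : R -> \bar R) :
  (forall eps, 0 <= f eps) -> forall eps, 0 <= over_abs_ln f eps.
Proof. by move=> f_ge0 eps; rewrite mule_ge0 // lee_fin invr_ge0. Qed.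

Section RatesOverLog.
Variables (R : realType) (rho : R) (zeta : R -> R).
Hypotheses (zetaA : in_A rho zeta) (rho_gt0 : (0 < rho)%R).
Variables (a b : R -> \bar R).
Hypotheses (a_ge0 : forall eps, 0 <= a eps) (b_ge0 : forall eps, 0 <= b eps).

Lemma k_m_mul_liminf0_le :
  (forall eps, (0 < eps)%R -> (eps <= rho)%R -> b (zeta eps) <= a eps) ->
  k_m zeta * liminf0 (over_abs_ln b) <= liminf0 (over_abs_ln a).
Proof.
move=> ba; apply: ereal_sup_mul_le.
- by apply: liminf0_ge0 => eps _; exact: over_abs_ln_ge0.
- by apply: liminf0_ge0 => eps _; exact: over_abs_ln_ge0.
move=> _ _ [dl1 dl10 <-] [dl2 dl20 <-] inf_ratio_ge0 inf_b_ge0.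
have min_dl2_gt0 : (0 < Num.min dl2 1)%R by rewrite lt_min dl20 ltr01.
have [eta eta0 zeta_lt] := zeta_small zetaA (ltW rho_gt0) min_dl2_gt0.
apply: (@liminf0_ge _ _ _ (Num.min (Num.min dl1 eta) (Num.min rho 1%R))).
  by rewrite !lt_min dl10 eta0 rho_gt0 ltr01.
move=> eps eps0; rewrite !lt_min => /andP[/andP[eps_dl1 eps_eta] /andP[eps_rho eps1]].
have zeta_eps0 := zeta_gt0 zetaA eps0 (ltW eps_rho).
have := zeta_lt eps (ltW eps0) eps_eta (ltW eps_rho); rewrite lt_min => /andP[zeta_dl2 zeta1].
apply: le_trans (lee_pmul inf_ratio_ge0 inf_b_ge0 _ _) _.
- by apply: ereal_inf_lbound; exists eps => //=; rewrite eps0 eps_dl1.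
- by apply: ereal_inf_lbound; exists (zeta eps) => //=; rewrite zeta_eps0 zeta_dl2.
rewrite /over_abs_ln muleCA -EFinM neg_divr_mulV_norm ?ln_lt0 ?eps0 ?zeta_eps0 //.
by rewrite lee_wpmul2r ?lee_fin ?invr_ge0 // ba // ltW.
Qed.

Lemma limsup0_le_k_M_mul : 0 < k_M zeta ->
  (forall eps, (0 < eps)%R -> (eps <= rho)%R -> a eps <= b (zeta eps / 2)) ->
  limsup0 (over_abs_ln a) <= k_M zeta * limsup0 (over_abs_ln b).
Proof.
move=> kM0 ab; have : 0 <= limsup0 (over_abs_ln b).
  by apply: limsup0_ge0 => eps _; exact: over_abs_ln_ge0.
case Eb: (limsup0 (over_abs_ln b)) => [l| |] // l0; last by rewrite gt0_muley ?leey.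
case Ek: (k_M zeta) kM0 (k_M_lt_pinfty zetaA rho_gt0) => [k| |] // k0 _.
rewrite lee_fin in l0; rewrite lte_fin in k0.
rewrite muleC -EFinM; apply/lee_addgt0Pr => u u0.
have [t t0 slack] := exists_slack_mul_le l0 k0 u0.
have : k_M zeta < (k + t)%:E by rewrite Ek lte_fin ltrDl.
move=> /limsup0_lt [dl1 dl10 ratio_lt].
have : limsup0 (over_abs_ln b) < (l + t)%:E by rewrite Eb lte_fin ltrDl.
move=> /limsup0_lt [dl2 dl20 b_lt].
have min_dl2_gt0 : (0 < Num.min dl2 1)%R by rewrite lt_min dl20 ltr01.
have [eta eta0 zeta_lt] := zeta_small zetaA (ltW rho_gt0) min_dl2_gt0.
apply: (@limsup0_le _ _ _
    (Num.min (Num.min dl1 eta) (Num.min rho (expR (- (ln 2 / t)))))).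
  by rewrite !lt_min dl10 eta0 rho_gt0 expR_gt0.
move=> eps eps0; rewrite !lt_min => /andP[/andP[eps_dl1 eps_eta] /andP[eps_rho eps_small]].
have zeta_eps0 := zeta_gt0 zetaA eps0 (ltW eps_rho).
have := zeta_lt eps (ltW eps0) eps_eta (ltW eps_rho); rewrite lt_min => /andP[zeta_dl2 zeta1].
set c := (zeta eps / 2)%R.
have c0 : (0 < c)%R by rewrite divr_gt0.
have ln_c : (ln c < 0)%R by rewrite ln_lt0 // c0 (lt_trans (ltr_half zeta_eps0) zeta1).
have ratio_le : (`|ln c| / `|ln eps| <= k + 2 * t)%R.
  apply: norm_ln_half_div_le => //; rewrite -lte_fin; exact: ratio_lt.
apply: le_trans (lee_wpmul2r _ (ab _ eps0 (ltW eps_rho))) _; first by rewrite lee_fin invr_ge0.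
have -> : b c * ((`|ln eps|)^-1)%:E = over_abs_ln b c * (`|ln c| / `|ln eps|)%:E.
  by rewrite /over_abs_ln -muleA -EFinM mulKf // normr_eq0 lt_eqF.
apply: le_trans (lee_pmul (over_abs_ln_ge0 b_ge0 c) _ (ltW (b_lt _ c0 _))
  (_ : _ <= (k + 2 * t)%:E)) _.
- by rewrite lee_fin divr_ge0.
- exact: lt_trans (ltr_half zeta_eps0) zeta_dl2.
- by rewrite lee_fin.
by rewrite -EFinM -EFinD lee_fin.
Qed.

End RatesOverLog.

Theorem mainTheorem14 (R : realType) (G : countType) (mul : G -> G -> G) (e : G)
    (inv : G -> G) (X : Type) (d : X -> X -> R) (act : G -> X -> X)
    (F : nat -> {fset G}) (rho : R) (zeta : R -> R) :
  is_group mul e inv ->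
  is_Folner R mul F ->
  is_Gsystem mul e d act ->
  is_diameter d rho ->
  in_A rho zeta ->
  0 < k_m zeta -> 0 < k_M zeta ->
  let zeta_d := fun x y => zeta (d x y) in
  k_m zeta * lower_mdim_M act zeta_d F <= lower_mdim_M act d F /\
  upper_mdim_M act d F <= k_M zeta * upper_mdim_M act zeta_d F.
Proof.
move=> _ _ [d_metric [d_cpt [_ [_ act_cont]]]] [d_le [x0 [y0 d_rho]]] zetaA _ kM0 zeta_d.
have d_ge0 : forall x y, (0 <= d x y)%R := d_metric.1.
have [rho_eq0|rho_gt0] : rho = 0%R \/ (0 < rho)%R.
  by rewrite -d_rho; have := d_ge0 x0 y0; rewrite le_eqVlt => /orP[/eqP <-|->]; [left|right].
- have d_eq0 x y : d x y = 0%R by apply/eqP; rewrite eq_le d_ge0 -rho_eq0 d_le.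
  have [_ [_ [_ [_ [_ zeta0]]]]] := zetaA.
  have [d_lower d_upper] : lower_mdim_M act d F = 0 /\ upper_mdim_M act d F = 0.
    by apply: (mdim_M_eq0 _ _ x0) => x y; rewrite d_eq0.
  have [zeta_lower zeta_upper] :
      lower_mdim_M act zeta_d F = 0 /\ upper_mdim_M act zeta_d F = 0.
    by apply: (mdim_M_eq0 _ _ x0) => x y; rewrite /zeta_d d_eq0 zeta0.
  by rewrite d_lower d_upper zeta_lower zeta_upper !mule0.
have sep_ge0 (r : X -> X -> R) eps : 0 <= sep_rate act r F eps := sep_rate_ge0 act F x0 r eps.
split.
- apply: (k_m_mul_liminf0_le zetaA rho_gt0 (sep_ge0 d) (sep_ge0 zeta_d)) => eps eps0 epsrho.
  exact: (sep_rate_zeta_le d_metric zetaA F x0 d_cpt act_cont eps0 epsrho).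
- apply: (limsup0_le_k_M_mul zetaA rho_gt0 (sep_ge0 zeta_d) kM0) => eps eps0 epsrho.
  have zeta_eps0 := zeta_gt0 zetaA eps0 epsrho.
  apply: (sep_rate_le_zeta d_metric d_le zetaA F x0 d_cpt act_cont eps0).
    by rewrite divr_gt0.
  exact: ltr_half.
Qed.
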